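(* Let $T$ be a finite tree with at least one edge, and let $r\ge1$, $s\ge1$ be integers. There is a bijection between partitions of the vertex set of $T$ into $r+1$ non-empty parts, each $(s+1)$-scattered, and partitions of the edge set of $T$ into $r$ non-empty parts, each $s$-scattered.
   Context: For distinct vertices $v,w$ of a tree, their distance is the number of edges on the unique path between them. For distinct edges $e,e'$, their distance is $p-1$, where $e=e_1,e_2,\dots,e_p=e'$ is the shortest sequence of edges in which consecutive edges share a vertex (so two edges sharing a vertex have distance $1$). A set of vertices (resp. edges) is $s$-scattered if any two distinct elements have distance $\ge s$. *)

From mathcomp Require Import all_boot.
Set Implicit Arguments. Unset Strict Implicit. Unset Printing Implicit Defensive.

(* A finite simple graph on the finType T is a symmetric irreflexive relation
   e : rel T.  A walk from x to y of length n is a sequence p with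
   path e x p, last x p = y and size p = n (n edges). *)

Definition simple_path {T : finType} (e : rel T) (x y : T) (p : seq T) : bool :=
  [&& path e x p, last x p == y & uniq (x :: p)].

Definition is_tree {T : finType} (e : rel T) : Prop :=
  [/\ symmetric e, irreflexive e,
      (forall x y : T, exists p, simple_path e x y p) &
      (forall (x y : T) p q, simple_path e x y p -> simple_path e x y q -> p = q)].

Definition is_edge {T : finType} (e : rel T) (A : {set T}) : bool :=
  [exists x, [exists y, e x y && (A == [set x; y])]].

Definition edge_t {T : finType} (e : rel T) := {A : {set T} | is_edge e A}.

Definition edge_adj (T : finType) (e : rel T) : rel (edge_t e) :=
  fun a b => (val a :&: val b) != set0.

(* For a relation R, "the distance between distinct a, b is >= s": every
   R-sequence a = a_0, a_1, ..., a_n = b has n >= s.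
   - with R = e this is vertex distance (number of edges of the path);
   - with R = edge_adj e, n = p-1 for the edge sequence e_1,...,e_p,
     which is exactly the edge distance of the paper. *)
Definition dist_ge {X : finType} (R : rel X) (s : nat) (a b : X) : Prop :=
  forall p : seq X, path R a p -> last a p = b -> s <= size p.

Definition scattered {X : finType} (R : rel X) (s : nat) (A : {set X}) : Prop :=
  forall a b, a \in A -> b \in A -> a != b -> dist_ge R s a b.

(* Partitions of the vertex set into k nonempty parts, each (s)-scattered.
   (mathcomp's [partition P D] already forces all parts to be nonempty.) *)
Definition vpart {T : finType} (e : rel T) (k s : nat) (P : {set {set T}}) : Prop :=
  [/\ partition P [set: T], #|P| = k & forall A, A \in P -> scattered e s A].

Definition epart {T : finType} (e : rel T) (k s : nat)
    (Q : {set {set edge_t e}}) : Prop :=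
  [/\ partition Q [set: edge_t e], #|Q| = k &
      forall A, A \in Q -> scattered (@edge_adj T e) s A].

From mathcomp Require Import all_boot zify.
From Stdlib Require Import ProofIrrelevance.
Set Implicit Arguments. Unset Strict Implicit. Unset Printing Implicit Defensive.

(* It suffices that both sets have the same size.  Call two vertices (edges)
   conflicting when they are at distance at most s (s - 1); a part is scattered
   iff it is independent for the conflict relation.  If the conflicts of a new point x inside S form a clique N,
   partitions of x + S into k + 1 independent blocks number
   p(S, k) + (k + 1 - |N|) p(S, k + 1): either {x} is a block, or x joins one of the
   blocks of a partition of S that avoids N.  Root the tree and add the vertices by
   nondecreasing depth.  In a tree, distances are read off the depths at which two
   ancestor chains meet, and this makes the conflicts of a deepest vertex v, and of
   its parent edge, cliques; moreover v has exactly one more conflicting vertex (its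
   ancestor at distance s, or the root if that is closer) than its parent edge has
   conflicting edges.  Hence vertex partitions into k + 1 parts and edge partitions
   into k parts obey the same recurrence, with the same values for S = {root}. *)

Lemma exists_bijective_sig (A B : finType) (PA : A -> Prop) (PB : B -> Prop)
    (SA : {set A}) (SB : {set B}) :
  (forall a, PA a <-> a \in SA) -> (forall b, PB b <-> b \in SB) -> #|SA| = #|SB| ->
  exists f : {a | PA a} -> {b | PB b}, bijective f.
Proof.
move=> hA hB E.
pose f (u : {a | PA a}) : {b | PB b} := let: exist a ha := u in
  exist _ (enum_val (cast_ord E (enum_rank_in (proj1 (hA a) ha) a)))
    (proj2 (hB _) (enum_valP _)).
pose g (u : {b | PB b}) : {a | PA a} := let: exist b hb := u in
  exist _ (enum_val (cast_ord (esym E) (enum_rank_in (proj1 (hB b) hb) b)))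
    (proj2 (hA _) (enum_valP _)).
exists f, g.
- case=> a ha; apply: subset_eq_compat => /=.
  by rewrite enum_valK_in cast_ordK enum_rankK_in //; apply/hA.
- case=> b hb; apply: subset_eq_compat => /=.
  by rewrite enum_valK_in cast_ordKV enum_rankK_in //; apply/hB.
Qed.

Section PartitionSurgery.
Variable X : finType.
Implicit Types (P : {set {set X}}) (B D : {set X}).

Lemma partition_replace P D B B' : partition P D -> B \in P -> B' != set0 ->
  [disjoint B' & D :\: B] ->
  [/\ partition (B' |: (P :\ B)) (B' :|: (D :\: B)), B' \notin P :\ B
    & #|B' |: (P :\ B)| = #|P|].
Proof.
move=> pP BP B'0 dB'.
have pPB := partitionD1 pP BP.
have B'PB : B' \notin P :\ B.
  apply: contra B'0 => /(partitionS pPB) /setIidPl sB'.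
  by move: dB'; rewrite -setI_eq0 sB'.
split=> //; first exact: partitionU1.
by rewrite cardsU1 B'PB (cardsD1 B P) BP.
Qed.

Lemma set1_notin_partition P D x : partition P D -> x \notin D -> [set x] \notin P.
Proof. by move=> pP; apply: contra => /(partitionS pP); rewrite sub1set. Qed.

End PartitionSurgery.

Section IndependentPartitions.
Variables (X : finType) (near : rel X).
Hypothesis near_sym : symmetric near.
Implicit Types (P Q : {set {set X}}) (A B S : {set X}).

Definition indep B := [forall a in B, forall b in B, (a != b) ==> ~~ near a b].

Definition indep_parts S k := [set P | [&& partition P S, #|P| == k
  & [forall B in P, indep B]]].

Lemma indepP B : reflect {in B &, forall a b, a != b -> ~~ near a b} (indep B).
Proof.
apply: (iffP forall_inP) => [H a b aB bB|H a aB].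
  by have /forall_inP/(_ b bB)/implyP := H a aB.
by apply/forall_inP => b bB; apply/implyP; apply: H.
Qed.

Lemma indep_partsP P S k : reflect
  [/\ partition P S, #|P| = k & {in P, forall B, indep B}] (P \in indep_parts S k).
Proof.
rewrite inE; apply: (iffP and3P) => [[pP /eqP cP /forall_inP iP]|[pP cP iP]].
  by split.
by split; [|apply/eqP|apply/forall_inP].
Qed.

Lemma indepS A B : A \subset B -> indep B -> indep A.
Proof. by move=> /subsetP AB /indepP iB; apply/indepP => a b /AB aB /AB; apply: iB. Qed.

Lemma indep_set1 x : indep [set x].
Proof. by apply/indepP => a b /set1P -> /set1P ->; rewrite eqxx. Qed.

Lemma indepU1 x B : [disjoint B & [set y | near x y]] -> indep B -> indep (x |: B).
Proof.
move=> /disjointFr dB /indepP iB.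
have nxB b : b \in B -> ~~ near x b by move=> bB; move: (dB b bB); rewrite inE => ->.
apply/indepP => a b /setU1P[->|aB] /setU1P[->|bB]; rewrite ?eqxx //.
- by move=> _; apply: nxB.
- by move=> _; rewrite near_sym; apply: nxB.
- exact: iB.
Qed.

Lemma card_indep_parts_set0 k : #|indep_parts set0 k| = (k == 0).
Proof.
have -> : indep_parts set0 k = if k == 0 then [set set0] else set0.
  apply/setP => P; rewrite !inE partition_set0.
  have [->|P0] := eqVneq P set0; last by case: (k == 0); rewrite ?inE ?(negbTE P0).
  rewrite cards0 eq_sym; case: (k == 0); rewrite ?inE ?eqxx //=.
  by apply/forall_inP => B; rewrite inE.
by case: (k == 0); rewrite ?cards1 ?cards0.
Qed.

Lemma indep_parts0 S : S != set0 -> indep_parts S 0 = set0.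
Proof.
move=> S0; apply/setP => P; rewrite !inE cards_eq0; apply/negP => /and3P[pP /eqP P0 _].
by move: S0; rewrite -(cover_partition pP) P0 /cover big_set0 eqxx.
Qed.

Section AddPoint.
Variables (S : {set X}) (x : X).
Hypothesis xS : x \notin S.
Let N := [set y in S | near x y].

Lemma indep_parts_with_set1 k :
  [set P in indep_parts (x |: S) k.+1 | [set x] \in P] =
  [set [set x] |: Q | Q in indep_parts S k].
Proof.
apply/setP => P; rewrite inE; apply/andP/imsetP => [[/indep_partsP[pP cP iP] xP]|].
  exists (P :\ [set x]); last by rewrite setD1K.
  apply/indep_partsP; split.
  - by rewrite -(setU1K xS); apply: partitionD1.
  - by move: cP; rewrite (cardsD1 [set x]) xP => -[].
  - by move=> B /setD1P[_]; apply: iP.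
case=> Q /indep_partsP[pQ cQ iQ] ->.
have xQ := set1_notin_partition pQ xS.
split; last exact: setU11.
apply/indep_partsP; split.
- by apply: partitionU1; rewrite ?disjoints1 //; apply/set0Pn; exists x; rewrite inE.
- by rewrite cardsU1 xQ cQ.
- by move=> B /setU1P[->|/iQ//]; apply: indep_set1.
Qed.

(* Mutually inverse maps between the partitions of [x |: S] in which [x] is not a
   singleton block and the pairs (partition [Q] of [S], block [B] of [Q] avoiding [N]). *)
Definition part_delete P := let B := pblock P x in (B :\ x) |: (P :\ B).
Definition part_insert Q B := (x |: B) |: (Q :\ B).

Lemma part_delete_spec k P : P \in indep_parts (x |: S) k.+1 -> [set x] \notin P ->
  [/\ part_delete P \in indep_parts S k.+1, pblock P x :\ x \in part_delete P,
      [disjoint pblock P x :\ x & N] & part_insert (part_delete P) (pblock P x :\ x) = P].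
Proof.
case/indep_partsP => pP cP iP xP; rewrite /part_delete; set B := pblock P x.
have xP' : x \in cover P by rewrite (cover_partition pP) setU11.
have xB : x \in B by rewrite mem_pblock.
have BP : B \in P by apply: pblock_mem.
have Bx0 : B :\ x != set0.
  by apply: contra xP => /eqP Bx0; rewrite -(setD1K xB) Bx0 setU0 in BP.
have dB : [disjoint B :\ x & (x |: S) :\: B].
  by apply/pred0P => z /=; rewrite !inE; case: (z \in B); rewrite !andbF.
have [pD BxPB cD] := partition_replace pP BP Bx0 dB.
have DS : (B :\ x) :|: ((x |: S) :\: B) = S.
  have /subsetP sB := partitionS pP BP.
  apply/setP => z; rewrite !inE; case: eqP => [->|/eqP zx]; first by rewrite xB (negbTE xS).
  by case zB: (z \in B) => //=; move: (sB z zB); rewrite !inE (negbTE zx).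
split.
- apply/indep_partsP; split; [by rewrite -DS | by rewrite cD |].
  move=> C /setU1P[->|/setD1P[_ /iP//]]; exact: indepS (subsetDl _ _) (iP _ BP).
- exact: setU11.
- apply/pred0P => z /=; rewrite !inE; apply/negP => /and3P[/andP[zx zB] _ nxz].
  by move/indepP: (iP _ BP) => /(_ x z xB zB); rewrite eq_sym zx nxz => /(_ isT).
- by rewrite /part_insert setU1K // (setD1K xB) (setD1K BP).
Qed.

Lemma part_insert_spec k Q B : Q \in indep_parts S k.+1 -> B \in Q -> [disjoint B & N] ->
  [/\ part_insert Q B \in indep_parts (x |: S) k.+1, [set x] \notin part_insert Q B,
      part_delete (part_insert Q B) = Q & pblock (part_insert Q B) x :\ x = B].
Proof.
case/indep_partsP => pQ cQ iQ BQ dBN; rewrite /part_insert.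
have /subsetP sB := partitionS pQ BQ.
have xB : x \notin B by apply: contra xS => /sB.
have xB0 : x |: B != set0 by apply/set0Pn; exists x; apply: setU11.
have dB : [disjoint x |: B & S :\: B].
  apply/pred0P => z /=; rewrite !inE.
  by case: eqP => [->|_]; [rewrite (negbTE xS) !andbF | case: (z \in B)].
have [pI xBQ cI] := partition_replace pQ BQ xB0 dB.
have DS : (x |: B) :|: (S :\: B) = x |: S.
  apply/setP => z; rewrite !inE; case: (z == x) => //=.
  by case zB: (z \in B) => //=; rewrite sB.
have pbx : pblock ((x |: B) |: (Q :\ B)) x = x |: B.
  by apply: def_pblock (partition_trivIset pI) (setU11 _ _) (setU11 _ _).
split.
- apply/indep_partsP; split; [by rewrite -DS | by rewrite cI |].
  move=> C /setU1P[->|/setD1P[_ /iQ//]]; apply: indepU1 (iQ _ BQ).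
  apply/pred0P => z /=; rewrite !inE; apply/negP => /andP[zB nxz].
  by move/pred0P/(_ z): dBN; rewrite /= !inE zB (sB z zB) nxz.
- rewrite !inE negb_or negb_and negbK; apply/andP; split.
    have /set0Pn[z zB] := partition_neq0 pQ BQ.
    apply/eqP => /setP/(_ z); rewrite !inE zB orbT => /eqP zx.
    by rewrite -zx zB in xB.
  by rewrite (set1_notin_partition pQ xS) orbT.
- by rewrite /part_delete pbx setU1K // setU1K // setD1K.
- by rewrite pbx setU1K.
Qed.

Lemma part_delete_fiber k Q : Q \in indep_parts S k.+1 ->
  [set P in indep_parts (x |: S) k.+1 | ([set x] \notin P) && (part_delete P == Q)] =
  part_insert Q @: [set B in Q | [disjoint B & N]].
Proof.
move=> QS; apply/setP => P; rewrite inE; apply/idP/imsetP.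
  case/and3P => PS xP /eqP <-; have [_ BxP dBx PE] := part_delete_spec PS xP.
  by exists (pblock P x :\ x); rewrite // inE BxP.
case=> B; rewrite inE => /andP[BQ dB] ->.
by have [-> -> -> _] := part_insert_spec QS BQ dB; rewrite eqxx.
Qed.

Hypothesis N_clique : {in N &, forall y z, y != z -> near y z}.

Lemma card_blocks_avoiding k Q : Q \in indep_parts S k.+1 ->
  #|[set B in Q | [disjoint B & N]]| = k.+1 - #|N|.
Proof.
case/indep_partsP => pQ cQ iQ.
have NQ y : y \in N -> y \in cover Q by rewrite (cover_partition pQ) inE => /andP[].
have meetE : [set B in Q | ~~ [disjoint B & N]] = pblock Q @: N.
  apply/setP => B; rewrite inE; apply/andP/imsetP => [[BQ]|[y yN ->]].
    case/pred0Pn => y /andP[yB yN].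
    by exists y; rewrite // (def_pblock (partition_trivIset pQ) BQ yB).
  split; first exact/pblock_mem/NQ.
  by apply/pred0Pn; exists y; rewrite /= yN mem_pblock NQ.
have card_meet : #|[set B in Q | ~~ [disjoint B & N]]| = #|N|.
  rewrite meetE; apply: card_in_imset => y z yN zN Eyz; apply: contraTeq isT => yz.
  have yb : y \in pblock Q y by rewrite mem_pblock NQ.
  have zb : z \in pblock Q y by rewrite Eyz mem_pblock NQ.
  by move/indepP: (iQ _ (pblock_mem (NQ _ yN))) => /(_ y z yb zb yz); rewrite N_clique.
rewrite -cQ -card_meet -(cardsID [set B : {set X} | [disjoint B & N]] Q) setIdE.
have -> : Q :\: [set B : {set X} | [disjoint B & N]] = [set B in Q | ~~ [disjoint B & N]].
  by apply/setP => B; rewrite !inE andbC.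
by rewrite addnK.
Qed.

Lemma card_indep_parts_U1 k : #|indep_parts (x |: S) k.+1| =
  #|indep_parts S k| + (k.+1 - #|N|) * #|indep_parts S k.+1|.
Proof.
rewrite -(cardsID [set P : {set {set X}} | [set x] \in P]) -setIdE indep_parts_with_set1.
rewrite card_in_imset; last first.
  move=> Q1 Q2 /indep_partsP[pQ1 _ _] /indep_partsP[pQ2 _ _] E.
  by rewrite -(setU1K (set1_notin_partition pQ1 xS)) E setU1K // (set1_notin_partition pQ2 xS).
congr (_ + _); rewrite -sum1_card.
rewrite (partition_big part_delete (mem (indep_parts S k.+1))); last first.
  by move=> P /setDP[PS]; rewrite inE => xP; case: (part_delete_spec PS xP).
rewrite mulnC -sum_nat_const; apply: eq_bigr => Q QS.
rewrite -(card_blocks_avoiding QS) -(card_in_imset (f := part_insert Q)).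
  rewrite -(part_delete_fiber QS) -sum1_card; apply: eq_bigl => P.
  by rewrite !inE; case: ([set x] \in P); rewrite /= ?andbF ?andbT.
move=> B1 B2; rewrite !inE => /andP[B1Q d1] /andP[B2Q d2] E.
have [_ _ _ <-] := part_insert_spec QS B1Q d1.
by rewrite E; case: (part_insert_spec QS B2Q d2).
Qed.

End AddPoint.
End IndependentPartitions.

Section BoundedWalks.
Variables (X : finType) (R : rel X).

Definition within n a b := exists p, [/\ path R a p, last a p = b & size p <= n].

Lemma within_refl n a : within n a a.
Proof. by exists [::]. Qed.

Lemma within_step a b : R a b -> within 1 a b.
Proof. by exists [:: b]; rewrite /= andbT. Qed.

Lemma within_trans m n a b c : within m a b -> within n b c -> within (m + n) a c.
Proof.
case=> p [pp lp sp] [q [pq lq sq]]; exists (p ++ q).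
by rewrite cat_path last_cat lp pp pq size_cat leq_add.
Qed.

Lemma within_widen m n a b : m <= n -> within m a b -> within n a b.
Proof. by move=> mn [p [pp lp sp]]; exists p; split=> //; apply: leq_trans mn. Qed.

Lemma within_sym (R_sym : symmetric R) n a b : within n a b -> within n b a.
Proof.
case=> p [pp <- sp]; apply: within_widen sp _ => {n b}.
elim: p a pp => [|c p IH] a /=; first by move=> _; apply: within_refl.
case/andP => Rac pp; rewrite -addn1; apply: within_trans (IH _ pp) _.
by apply: within_step; rewrite R_sym.
Qed.

Lemma dist_ge_within s a b : dist_ge R s.+1 a b <-> ~ within s a b.
Proof.
split=> [H [p [pp lp sp]]|H p pp lp]; first by have := H p pp lp; rewrite ltnNge sp.
by rewrite ltnNge; apply/negP => sp; apply: H; exists p.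
Qed.

Lemma scattered_indep (near : rel X) s A :
  (forall a b, reflect (within s a b) (near a b)) ->
  scattered R s.+1 A <-> indep near A.
Proof.
move=> nearP; split=> [H|/indepP H a b aA bA ab].
  by apply/indepP => a b aA bA ab; apply/negP => /nearP; apply/dist_ge_within/H.
by apply/dist_ge_within => /nearP; apply/negP/H.
Qed.

Lemma scattered_partition_indep_parts (near : rel X) n k (P : {set {set X}}) :
  (forall a b, reflect (within n a b) (near a b)) ->
  [/\ partition P [set: X], #|P| = k & forall A, A \in P -> scattered R n.+1 A] <->
  P \in indep_parts near [set: X] k.
Proof.
move=> nearP; split=> [[pP cP sP]|/indep_partsP[pP cP iP]].
  by apply/indep_partsP; split=> // A /sP /(scattered_indep A nearP).
by split=> // A /iP /(scattered_indep A nearP).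
Qed.

End BoundedWalks.

Section RootedTree.
Variables (T : finType) (e : rel T).
Hypothesis tree_e : is_tree e.
Variable root : T.

Lemma tree_sym : symmetric e. Proof. by case: tree_e. Qed.
Lemma tree_irr : irreflexive e. Proof. by case: tree_e. Qed.

Lemma tree_connected x y : exists p, simple_path e x y p.
Proof. by case: tree_e. Qed.

Lemma tree_path_uniq x y p q : simple_path e x y p -> simple_path e x y q -> p = q.
Proof. by case: tree_e => _ _ _; apply. Qed.

Definition root_path x := xchoose (tree_connected root x).

Lemma root_pathP x : simple_path e root x (root_path x).
Proof. exact: xchooseP. Qed.

Lemma root_pathE x p : simple_path e root x p -> root_path x = p.
Proof. by move=> h; apply: tree_path_uniq h; apply: root_pathP. Qed.

Definition parent x := last root (belast root (root_path x)).
Definition depth x := size (root_path x).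

Lemma root_path_root : root_path root = [::].
Proof. by apply: root_pathE; rewrite /simple_path /= eqxx. Qed.

Lemma depth_root : depth root = 0.
Proof. by rewrite /depth root_path_root. Qed.

Lemma parent_root : parent root = root.
Proof. by rewrite /parent root_path_root. Qed.

Lemma depth_eq0 x : (depth x == 0) = (x == root).
Proof.
apply/idP/eqP => [|->]; last by rewrite depth_root.
rewrite /depth size_eq0 => /eqP p0; have := root_pathP x.
by rewrite /simple_path p0 /= => /andP[/eqP].
Qed.

Lemma depth_gt0 x : (0 < depth x) = (x != root).
Proof. by rewrite lt0n depth_eq0. Qed.

Lemma root_path_parent x : x != root -> root_path x = rcons (root_path (parent x)) x.
Proof.
move=> xr; have := root_pathP x; rewrite /parent.
case/lastP: (root_path x) => [|p y].
  by rewrite /simple_path /= => /andP[/eqP xr']; rewrite xr' eqxx in xr.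
rewrite /simple_path rcons_path last_rcons -rcons_cons rcons_uniq.
case/and3P => /andP[pp _] /eqP <- /andP[_ up]; rewrite belast_rcons /=.
by congr rcons; apply/esym/root_pathE; rewrite /simple_path pp eqxx up.
Qed.

Lemma depth_parent x : depth (parent x) = (depth x).-1.
Proof.
have [->|xr] := eqVneq x root; first by rewrite parent_root depth_root.
by rewrite {2}/depth (root_path_parent xr) size_rcons.
Qed.

Lemma edge_parent x : x != root -> e (parent x) x.
Proof.
move=> xr; have := root_pathP x; rewrite (root_path_parent xr) /simple_path rcons_path.
by case/and3P => /andP[_]; case/and3P: (root_pathP (parent x)) => _ /eqP ->.
Qed.

Lemma depth_iter i x : depth (iter i parent x) = depth x - i.
Proof. by elim: i => [|i IH]; rewrite ?subn0 // iterS depth_parent IH subnS. Qed.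

Lemma iter_parent_root i x : (iter i parent x == root) = (depth x <= i).
Proof. by rewrite -depth_eq0 depth_iter subn_eq0. Qed.

Lemma edge_parent_cases a b : e a b ->
  (b != root /\ a = parent b) \/ (a != root /\ b = parent a).
Proof.
move=> eab; move: (root_pathP b); move Eq: (root_path b) => q.
case/and3P=> pq /eqP lq uq; have [aq|aq] := boolP (a \in root :: q).
- left; move: pq lq uq Eq; case/splitPl: aq => q1 q2 la pq lq uq Eq.
  have s2 : simple_path e a b q2.
    move: pq lq uq; rewrite /simple_path cat_path last_cat la -cat_cons cat_uniq.
    case/andP => _ -> -> /and3P[_ q2q1 u2] /=; rewrite eqxx u2 andbT.
    by apply: contra q2q1 => aq2; apply/hasP; exists a; rewrite // -la mem_last.
  have s1 : simple_path e a b [:: b].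
    rewrite /simple_path /= eab eqxx inE /= andbT.
    by apply: contraTneq eab => ->; rewrite tree_irr.
  move: Eq; rewrite (tree_path_uniq s2 s1) => Eq.
  have br : b != root.
    by apply/eqP => br; move: Eq; rewrite br root_path_root; case: q1 {pq lq uq la}.
  by split=> //; rewrite /parent Eq cats1 belast_rcons /= la.
- right; have sa : simple_path e root a (rcons q a).
    have u : uniq (rcons (root :: q) a) by rewrite rcons_uniq aq uq.
    by rewrite /simple_path rcons_path pq last_rcons eqxx lq tree_sym eab -rcons_cons u.
  split; first by apply: contra aq => /eqP ->; rewrite mem_head.
  by rewrite /parent (root_pathE sa) belast_rcons /= lq.
Qed.

Definition meet (c : nat -> nat -> nat) n a b :=
  exists i j, iter i parent a = iter j parent b /\ c i j <= n.

Lemma meet_canonical a b i j : iter i parent a = iter j parent b ->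
  exists i' j', [/\ i' <= minn i (depth a), j' <= minn j (depth b),
    iter i' parent a = iter j' parent b & depth a - i' = depth b - j'].
Proof.
move=> E; have dE : depth a - i = depth b - j by rewrite -!depth_iter E.
have [/andP[ha hb]|] := boolP ((i <= depth a) && (j <= depth b)).
  by exists i, j; split=> //; lia.
rewrite negb_and -!ltnNge => h.
have toroot x k : depth x <= k -> iter k parent x = root.
  by move=> hk; apply/eqP; rewrite iter_parent_root.
exists (depth a), (depth b); split; rewrite ?toroot //; lia.
Qed.

Lemma within_meet n a b : within e n a b -> meet addn n a b.
Proof.
case=> p [pp lp sp]; elim: p a n pp lp sp => [|c p IH] a n /=.
  by move=> _ <- _; exists 0, 0.
case/andP => eac pp lp sp; have [i [j [E ij]]] : meet addn n.-1 c b by apply: IH => //; lia.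
case: (edge_parent_cases eac) => [[cr ac]|[ar ca]].
- case: i E ij => [|i] E ij.
    by exists 0, j.+1; split; [rewrite /= ac -E | lia].
  by exists i, j; rewrite ac -iterSr E; split=> //; lia.
- by exists i.+1, j; rewrite iterSr -ca E; split=> //; lia.
Qed.

Lemma within_iter_parent i a : i <= depth a -> within e i a (iter i parent a).
Proof.
elim: i => [|i IH] h; first exact: within_refl.
apply: (@within_widen _ _ (i + 1)); first by rewrite addn1.
apply: within_trans (IH (ltnW h)) (within_step _).
by rewrite tree_sym iterS edge_parent // iter_parent_root -ltnNge.
Qed.

Lemma meet_within n a b : meet addn n a b -> within e n a b.
Proof.
case=> i [j [E ij]]; have [i' [j' [hi hj E' _]]] := meet_canonical E.
apply: (@within_widen _ _ (i' + j')); first lia.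
apply: within_trans (within_iter_parent _) _; first lia.
by rewrite E'; apply/(within_sym tree_sym)/within_iter_parent; lia.
Qed.

Definition meetb (c : nat -> nat -> nat) n a b := [exists i : 'I_n.+2, exists j : 'I_n.+2,
  (c i j <= n) && (iter i parent a == iter j parent b)].

Lemma meetbP c n a b : (forall i j, maxn i j <= (c i j).+1) ->
  reflect (meet c n a b) (meetb c n a b).
Proof.
move=> c_max; apply: (iffP existsP) => [[i /existsP[j /andP[h /eqP E]]]|[i [j [E h]]]].
  by exists i, j.
have [hi hj] : i < n.+2 /\ j < n.+2 by have := c_max i j; lia.
by exists (Ordinal hi); apply/existsP; exists (Ordinal hj); rewrite /= h E eqxx.
Qed.

Section MeetCost.
Variable c : nat -> nat -> nat.
Hypothesis c_sym : forall i j, c i j = c j i.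
Hypothesis c_mono : forall i j i' j', i' <= i -> j' <= j -> c i' j' <= c i j.

Lemma meet_sym n a b : meet c n a b -> meet c n b a.
Proof. by case=> i [j [E h]]; exists j, i; rewrite c_sym. Qed.

Lemma meet_canonical_cost n a b : meet c n a b -> exists i j,
  [/\ c i j <= n, i <= depth a, j <= depth b, iter i parent a = iter j parent b
    & depth a - i = depth b - j].
Proof.
case=> i [j [E h]]; have [i' [j' [hi hj E' d]]] := meet_canonical E.
exists i', j'; split=> //; try lia.
by apply: leq_trans h; apply: c_mono; lia.
Qed.

Hypothesis c_shift : forall n i1 j1 i2 j2, i2 <= i1 -> j1 <= i1 -> j2 <= i2 ->
  c i1 j1 <= n -> c i2 j2 <= n -> c j1 (i1 - i2 + j2) <= n.

Lemma meet_clique n v y z : depth y <= depth v -> depth z <= depth v ->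
  meet c n v y -> meet c n v z -> meet c n y z.
Proof.
move=> hy hz /meet_canonical_cost[i1 [j1 [c1 _ hj1 E1 d1]]].
move=> /meet_canonical_cost[i2 [j2 [c2 _ hj2 E2 d2]]].
wlog h : i1 j1 i2 j2 y z hy hz c1 hj1 E1 d1 c2 hj2 E2 d2 / i2 <= i1.
  move=> WLOG; case: (leqP i2 i1) => h; first exact: (WLOG i1 j1 i2 j2).
  by apply/meet_sym/(WLOG i2 j2 i1 j1) => //; apply: ltnW.
(* Both meeting points lie on the path from [v] to the root; [y] and [z] meet at the
   higher one. *)
exists j1, (i1 - i2 + j2); split; last by apply: c_shift => //; lia.
by rewrite iterD -E2 -iterD subnK.
Qed.

End MeetCost.

Variable e0 : edge_t e.

Definition edge_of z : edge_t e := insubd e0 [set parent z; z].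

Definition child (f : edge_t e) : T :=
  odflt root [pick z in val f | (parent z \in val f) && (z != root)].

Lemma edge_of_val z : z != root -> val (edge_of z) = [set parent z; z].
Proof.
move=> zr; rewrite val_insubd ifT //.
by apply/existsP; exists (parent z); apply/existsP; exists z; rewrite edge_parent ?eqxx.
Qed.

Lemma parent_neq x : x != root -> parent x != x.
Proof.
rewrite -depth_gt0 => xr; apply: contraTneq xr => E.
by have := depth_parent x; rewrite E; lia.
Qed.

Lemma parent_parent_neq x : x != root -> parent (parent x) != x.
Proof.
rewrite -depth_gt0 => xr; apply: contraTneq xr => E.
by have := depth_parent (parent x); rewrite E depth_parent; lia.
Qed.

Lemma edge_val (f : edge_t e) : exists2 z, z != root & val f = [set parent z; z].
Proof.
case: f => A /= /existsP[a /existsP[b /andP[eab /eqP ->]]].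
by case: (edge_parent_cases eab) => [[br ->]|[ar ->]]; [exists b | exists a; rewrite // setUC].
Qed.

Lemma child_spec f : child f != root /\ val f = [set parent (child f); child f].
Proof.
have [z zr Ef] := edge_val f; rewrite /child; case: pickP => [c|none] /=; last first.
  by move: (none z); rewrite Ef !inE !eqxx orbT zr.
rewrite Ef !inE => /andP[/orP[/eqP cz|/eqP -> //] /andP[pc cr]]; rewrite cz in cr pc *.
case/orP: pc => /eqP E; first by move: (parent_neq cr); rewrite E eqxx.
by move: (parent_parent_neq zr); rewrite E eqxx.
Qed.

Lemma child_neq_root f : child f != root.
Proof. by case: (child_spec f). Qed.

Lemma edge_of_child f : edge_of (child f) = f.
Proof. by apply: val_inj; rewrite edge_of_val ?child_neq_root //; case: (child_spec f). Qed.

Lemma child_edge_of z : z != root -> child (edge_of z) = z.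
Proof.
move=> zr; case: (child_spec (edge_of z)); rewrite edge_of_val //.
set c := child _ => cr Ez; have : z \in [set parent c; c] by rewrite -Ez !inE eqxx orbT.
rewrite !inE => /orP[/eqP zc|/eqP //].
have : c \in [set parent z; z] by rewrite Ez !inE eqxx orbT.
rewrite !inE => /orP[/eqP cz|/eqP //].
by move: (parent_parent_neq zr); rewrite -cz -zc eqxx.
Qed.

Local Notation adj := (@edge_adj T e).

Lemma edge_adj_sym : symmetric adj.
Proof. by move=> f g; rewrite /edge_adj setIC. Qed.

Lemma edge_adj_share (f g : edge_t e) z : z \in val f -> z \in val g -> adj f g.
Proof. by move=> zf zg; apply/set0Pn; exists z; rewrite inE zf zg. Qed.

Lemma edge_adj_cases x y : x != root -> y != root -> adj (edge_of x) (edge_of y) ->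
  [\/ parent x = parent y, parent x = y, x = parent y | x = y].
Proof.
move=> xr yr; rewrite /edge_adj !edge_of_val // => /set0Pn[z].
rewrite !inE => /andP[/orP[]/eqP-> /orP[]/eqP E].
- by constructor 1.
- by constructor 2.
- by constructor 3.
- by constructor 4.
Qed.

(* Edges [parent x, x] and [parent y, y] whose lower ends reach a common vertex
   after [i] and [j] steps are at distance [i + j - 1] if [i, j > 0] and [i + j]
   otherwise. *)
Definition edge_cost i j := i + j - minn (minn i j) 1.

Lemma within_adj_meet n f g : within adj n f g -> meet edge_cost n (child f) (child g).
Proof.
case=> p [pp lp sp]; elim: p f n pp lp sp => [|h p IH] f n /=.
  by move=> _ <- _; exists 0, 0.
case/andP => afh pp lp sp.
have [i [j [E ij]]] : meet edge_cost n.-1 (child h) (child g) by apply: IH => //; case: n sp.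
move: afh ij; rewrite /edge_cost -{1}(edge_of_child f) -{1}(edge_of_child h).
case/edge_adj_cases; rewrite ?child_neq_root // => H ij.
- case: i E ij => [|i] E ij.
    by exists 1, j.+1; split; [rewrite /= H -E | lia].
  by exists i.+1, j; split; [rewrite iterSr H -iterSr | lia].
- by exists i.+1, j; split; [rewrite iterSr H | lia].
- case: i E ij => [|i] E ij.
    by exists 0, j.+1; split; [rewrite /= H -E | lia].
  by exists i, j; split; [rewrite H -iterSr | lia].
- by exists i, j; split; [rewrite H | lia].
Qed.

Lemma edge_of_adj_parent x : parent x != root -> adj (edge_of x) (edge_of (parent x)).
Proof.
move=> pr; have xr : x != root by apply: contraNneq pr => ->; rewrite parent_root.
by apply: (@edge_adj_share _ _ (parent x)); rewrite !edge_of_val // !inE eqxx ?orbT.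
Qed.

Lemma within_adj_iter i x :
  i < depth x -> within adj i (edge_of x) (edge_of (iter i parent x)).
Proof.
elim: i => [|i IH] h; first exact: within_refl.
apply: (@within_widen _ _ (i + 1)); first by rewrite addn1.
apply: within_trans (IH (ltnW h)) (within_step _).
by rewrite iterS edge_of_adj_parent // -iterS iter_parent_root -ltnNge.
Qed.

Lemma meet_within_adj n x y : x != root -> y != root ->
  meet edge_cost n x y -> within adj n (edge_of x) (edge_of y).
Proof.
move=> xr yr [i0 [j0 [E0 c0]]]; have [i [j [hi hj E _]]] := meet_canonical E0.
have {c0} c : edge_cost i j <= n by apply: leq_trans c0; rewrite /edge_cost; lia.
have adjsym := within_sym edge_adj_sym.
have below k z : iter k parent z != root -> k < depth z.
  by rewrite iter_parent_root -ltnNge.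
case: i j hi hj E c => [|i] [|j] hi hj /= E c.
- by rewrite E; apply: within_refl.
- have hy : j.+1 < depth y by apply: below; rewrite /= -E.
  by apply: within_widen c _; rewrite E; apply: adjsym (within_adj_iter hy).
- have hx : i.+1 < depth x by apply: below; rewrite /= E.
  apply: (@within_widen _ _ i.+1); first by move: c; rewrite /edge_cost; lia.
  by rewrite -E; apply: within_adj_iter hx.
- have rx : iter i parent x != root by rewrite iter_parent_root; lia.
  have ry : iter j parent y != root by rewrite iter_parent_root; lia.
  apply: (@within_widen _ _ (i + 1 + j)); first by move: c; rewrite /edge_cost; lia.
  apply: within_trans (adjsym _ _ _ (within_adj_iter (below _ _ ry))).
  apply: within_trans (within_adj_iter (below _ _ rx)) (within_step _).
  apply: (@edge_adj_share _ _ (parent (iter i parent x))).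
    by rewrite edge_of_val // !inE eqxx.
  by rewrite edge_of_val // E !inE eqxx.
Qed.

Lemma edge_cost_max i j : maxn i j <= (edge_cost i j).+1.
Proof. rewrite /edge_cost; lia. Qed.

Lemma edge_costC i j : edge_cost i j = edge_cost j i.
Proof. rewrite /edge_cost; lia. Qed.

Lemma edge_cost_mono i j i' j' : i' <= i -> j' <= j -> edge_cost i' j' <= edge_cost i j.
Proof. rewrite /edge_cost; lia. Qed.

Definition child_edges (S : {set T}) := [set f | child f \in S].

Definition vnear n : rel T := meetb addn n.
Definition enear n : rel (edge_t e) := fun f g => meetb edge_cost n (child f) (child g).

Lemma vnearP n a b : reflect (within e n a b) (vnear n a b).
Proof.
have addn_max i j : maxn i j <= (i + j).+1 by lia.
by apply: (iffP (meetbP _ _ _ addn_max)); [apply: meet_within | apply: within_meet].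
Qed.

Lemma enearP n f g : reflect (within adj n f g) (enear n f g).
Proof.
apply: (iffP (meetbP _ _ _ edge_cost_max)) => [|/within_adj_meet//].
by move/meet_within_adj; rewrite !edge_of_child; apply; apply: child_neq_root.
Qed.

Lemma vnear_sym n : symmetric (vnear n).
Proof. by move=> a b; apply/vnearP/vnearP; apply: (within_sym tree_sym). Qed.

Lemma enear_sym n : symmetric (enear n).
Proof. by move=> f g; apply/enearP/enearP; apply: (within_sym edge_adj_sym). Qed.

Lemma vnear_clique n (S : {set T}) v : {in S, forall w, depth w <= depth v} ->
  {in [set w in S | vnear n v w] &, forall y z, y != z -> vnear n y z}.
Proof.
move=> hd y z; rewrite !inE => /andP[yS /vnearP/within_meet ny].
move=> /andP[zS /vnearP/within_meet nz] _.
apply/vnearP/meet_within; apply: (meet_clique addnC _ _ (hd _ yS) (hd _ zS) ny nz).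
  by move=> *; apply: leq_add.
by move=> *; lia.
Qed.

Lemma enear_clique n (S : {set T}) v : v != root -> {in S, forall w, depth w <= depth v} ->
  {in [set f in child_edges S | enear n (edge_of v) f] &,
    forall f g, f != g -> enear n f g}.
Proof.
move=> vr hd f g; rewrite !inE /enear child_edge_of // => /andP[fS nf] /andP[gS ng] _.
move/meetbP: nf => /(_ edge_cost_max) nf; move/meetbP: ng => /(_ edge_cost_max) ng.
apply/meetbP; first exact: edge_cost_max.
apply: (meet_clique edge_costC edge_cost_mono _ (hd _ fS) (hd _ gS) nf ng).
by rewrite /edge_cost => *; lia.
Qed.

Lemma meet_addnS n v w : depth w <= depth v -> meet addn n.+1 v w ->
  w = iter (minn n.+1 (depth v)) parent v \/ (w != root /\ meet edge_cost n v w).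
Proof.
move=> hw /(meet_canonical_cost (fun _ _ _ _ => @leq_add _ _ _ _)).
case=> i [[|j] [c hi hj /= E d]].
- have [<-|im] := eqVneq i (minn n.+1 (depth v)); first by left; rewrite E.
  right; split; last by exists i, 0; split=> //; rewrite /edge_cost; lia.
  by rewrite -E iter_parent_root -ltnNge; lia.
- right; split; first by rewrite -depth_gt0; lia.
  by exists i, j.+1; split=> //; rewrite /edge_cost; lia.
Qed.

Lemma meet_edge_costS n v w : meet edge_cost n v w -> meet addn n.+1 v w.
Proof. by case=> i [j [E c]]; exists i, j; split=> //; move: c; rewrite /edge_cost; lia. Qed.

Lemma top_ancestor_not_meet n v (a := iter (minn n.+1 (depth v)) parent v) :
  a != root -> ~ meet edge_cost n v a.
Proof.
rewrite iter_parent_root -ltnNge => hv /(meet_canonical_cost edge_cost_mono).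
case=> i [j [c hi hj _]]; rewrite depth_iter; move: c; rewrite /edge_cost; lia.
Qed.

Lemma card_vnear_enear n (S : {set T}) v : v != root ->
  {in S, forall w, depth w <= depth v} -> iter (minn n.+1 (depth v)) parent v \in S ->
  #|[set w in S | vnear n.+1 v w]| = #|[set f in child_edges S | enear n (edge_of v) f]|.+1.
Proof.
move=> vr hd aS; set a := iter (minn n.+1 (depth v)) parent v.
have meetP w := @meetbP edge_cost n v w edge_cost_max.
set W := [set w in S | (w != root) && meetb edge_cost n v w].
have vnearE : [set w in S | vnear n.+1 v w] = a |: W.
  apply/setP => w; rewrite !inE; apply/andP/orP.
    case=> wS /vnearP/within_meet/(meet_addnS (hd _ wS)) [->|[wr nw]]; first by left.
    by right; rewrite wS wr; apply/meetP.
  case=> [/eqP ->|/and3P[wS _ /meetP/meet_edge_costS nw]]; split=> //.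
    by apply/vnearP/meet_within; exists (minn n.+1 (depth v)), 0; split=> //; lia.
  exact/vnearP/meet_within.
have aW : a \notin W.
  by rewrite !inE; apply/negP => /and3P[_ ar /meetP]; apply: top_ancestor_not_meet.
have enearE : [set f in child_edges S | enear n (edge_of v) f] = edge_of @: W.
  apply/setP => f; rewrite !inE /enear child_edge_of //; apply/andP/imsetP.
    by case=> fS nf; exists (child f); rewrite ?edge_of_child // !inE fS child_neq_root.
  by case=> w; rewrite !inE => /and3P[wS wr nw] ->; rewrite child_edge_of.
rewrite vnearE enearE cardsU1 aW card_in_imset // => w1 w2.
rewrite !inE => /and3P[_ r1 _] /and3P[_ r2 _] E.
by rewrite -(child_edge_of r1) E child_edge_of.
Qed.

Lemma child_edgesU1 (S : {set T}) v : v != root -> v \notin S ->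
  child_edges (v |: S) = edge_of v |: child_edges S /\ edge_of v \notin child_edges S.
Proof.
move=> vr vS; split; last by rewrite inE child_edge_of.
apply/setP => f; rewrite !inE; have [->|fv] := eqVneq f (edge_of v).
  by rewrite child_edge_of // eqxx.
by congr (_ || _); apply: contraNF fv => /eqP <-; rewrite edge_of_child.
Qed.

Definition depth_prefix (S : {set T}) := forall a b, a \in S -> depth b < depth a -> b \in S.

Lemma card_vparts_set1_root m n k : #|indep_parts (vnear m) [set root] k.+1| =
  #|indep_parts (enear n) (child_edges [set root]) k|.
Proof.
have -> : child_edges [set root] = set0.
  by apply/setP => f; rewrite !inE (negbTE (child_neq_root f)).
have r0 : root \notin set0 by rewrite inE.
rewrite -[[set root]]setU0 (card_indep_parts_U1 (vnear_sym m) r0); last first.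
  by move=> y; rewrite !inE.
by rewrite !card_indep_parts_set0 muln0 addn0.
Qed.

Lemma deepest_neq_root (S : {set T}) v : root \in S -> S != [set root] ->
  {in S, forall w, depth w <= depth v} -> v != root.
Proof.
move=> rS S1 vmax; apply: contraNneq S1 => vr; apply/eqP/setP => w; rewrite inE.
apply/idP/eqP => [wS|->//]; apply/eqP; rewrite -depth_eq0 -leqn0.
by have := vmax w wS; rewrite vr depth_root.
Qed.

Lemma depth_prefixD1 (S : {set T}) v : depth_prefix S ->
  {in S, forall w, depth w <= depth v} -> depth_prefix (S :\ v).
Proof.
move=> dS vmax a b /setD1P[av aS] hb; rewrite !inE (dS _ _ aS hb) andbT.
by apply: contraTneq hb => ->; rewrite -leqNgt; apply: vmax.
Qed.

Lemma top_ancestor_mem n (S : {set T}) v : depth_prefix S -> v \in S -> v != root ->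
  iter (minn n.+1 (depth v)) parent v \in S :\ v.
Proof.
rewrite -depth_gt0 => dS vS dv; have := depth_iter (minn n.+1 (depth v)) v.
set a := iter _ _ _ => da; rewrite !inE (dS _ _ vS) ?andbT; last by rewrite da; lia.
by apply/eqP => av; move: da; rewrite av; lia.
Qed.

Lemma card_vparts_eparts n k (S : {set T}) : depth_prefix S -> root \in S ->
  #|indep_parts (vnear n.+1) S k.+1| = #|indep_parts (enear n) (child_edges S) k|.
Proof.
move Hm : #|S| => m; elim: m S Hm k => [|m IH] S cS k dS rS.
  by move: cS; rewrite (cardsD1 root) rS.
have [->|S1] := eqVneq S [set root]; first exact: card_vparts_set1_root.
have [v vS vmax] := @arg_maxnP _ root (fun w => w \in S) depth rS.
have vr := deepest_neq_root rS S1 vmax.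
set S' := S :\ v; have SE : S = v |: S' by rewrite setD1K.
have vS' : v \notin S' by rewrite !inE eqxx.
have hd : {in S', forall w, depth w <= depth v} by move=> w /setD1P[_ /vmax].
have card_near := card_vnear_enear vr hd (top_ancestor_mem n dS vS vr).
have IHS' j :
    #|indep_parts (vnear n.+1) S' j.+1| = #|indep_parts (enear n) (child_edges S') j|.
  apply: IH; last by rewrite !inE eq_sym vr.
    by move: cS; rewrite (cardsD1 v S) vS => -[].
  exact: depth_prefixD1.
have [ESE evS] := child_edgesU1 vr vS'.
rewrite SE ESE (card_indep_parts_U1 (vnear_sym _) vS' (vnear_clique hd)).
case: k => [|k].
  rewrite !indep_parts0 ?card_near ?subSS ?sub0n ?cards0 //.
    by apply/set0Pn; exists (edge_of v); rewrite setU11.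
  by apply/set0Pn; exists root; rewrite !inE eq_sym vr.
by rewrite (card_indep_parts_U1 (enear_sym _) evS (enear_clique vr hd)) !IHS' card_near subSS.
Qed.

End RootedTree.

Unset Implicit Arguments.
Set Strict Implicit.

Theorem corollary3p7 (T : finType) (e : rel T) (hT : is_tree e)
    (hedge : exists x y : T, e x y) (r s : nat) (hr : 1 <= r) (hs : 1 <= s) :
  exists f : {P : {set {set T}} | @vpart T e r.+1 s.+1 P} ->
             {Q : {set {set edge_t e}} | @epart T e r s Q},
    bijective f.
Proof.
case: s hs => // n _; case: hedge => x [y exy].
have e0 : edge_t e.
  by exists [set x; y]; apply/existsP; exists x; apply/existsP; exists y; rewrite exy eqxx.
apply: (exists_bijective_sig (SA := indep_parts (vnear hT x n.+1) setT r.+1)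
  (SB := indep_parts (enear hT x n) setT r)).
- by move=> P; apply: scattered_partition_indep_parts; apply: vnearP.
- by move=> Q; apply: scattered_partition_indep_parts; apply: enearP.
- have -> : [set: edge_t e] = child_edges hT x setT by apply/setP => f; rewrite !inE.
  by apply: (card_vparts_eparts e0); rewrite ?inE.
Qed.
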